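(* Let $G$ be the path graph on $n$ vertices $v_1,\dots,v_n$ ($v_t$ adjacent to $v_{t+1}$ for $1\le t<n$; the linear nearest-neighbor architecture). The QFT circuit on $n$ qubits produced by the construction in the context has CNOT cost $1.5n^2-1.5n-1$.
   Context: A walk is a sequence $(u_1,\dots,u_h)$ of vertices with consecutive entries adjacent (repetitions allowed), of length $h$. Each vertex carries one physical qubit; two-qubit gates only act on qubits at adjacent vertices. Gates: Hadamard $H$; controlled phase $CR_d=\mathrm{diag}(1,1,1,e^{i\pi/2^{d-1}})$; SWAP. Construction: let $P$ be a shortest walk in $G$ visiting all vertices. Place logical qubit $r$ ($1\le r\le n$) on the $r$-th distinct vertex of $P$ in order of first occurrence; whenever a SWAP is applied the logical qubits on its two vertices exchange places. Let $R=V$. For $r=1,\dots,n$: let $P'=(u_1,\dots,u_{k'})$ be $P$ if $r=1$, and otherwise a shortest walk in the induced subgraph $G[R]$ that starts at the vertex currently holding logical qubit $r$ and visits every vertex of $R$. Cascade $r$: apply $H$ to $u_1$; $j=1$, $U=\emptyset$; while $j\le k'-1$: (i) if $u_{j+1}\notin U$, apply $CR_d$ with control $u_{j+1}$, target $u_j$, where $d$ is (index of the logical qubit on $u_{j+1}$) $-\,r$, and add $u_{j+1}$ to $U$; (ii) if $j\le k'-2$ and $u_{j+2}=u_j$, set $j\leftarrow j+2$; otherwise, if $k'\ne 2$ apply SWAP to $u_j,u_{j+1}$, and set $j\leftarrow j+1$. After cascade $r$, remove from $R$ the vertex holding logical qubit $r$. CNOT cost: number of CNOTs after decomposition, counting $H$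 as 0, each $CR_d$ as 2, each SWAP as 3, and a $CR_d$ immediately followed by a SWAP on the same two qubits as 3 in total. *)

From mathcomp Require Import all_boot all_order all_algebra.
Set Implicit Arguments. Unset Strict Implicit. Unset Printing Implicit Defensive.
Import GRing.Theory Num.Theory.

(* Vertices are natural numbers; a graph on vertex set V is a (symmetric)
   adjacency relation [adj]. *)

(* The path graph on n vertices v_1..v_n, encoded as 0..n-1
   (v_t is encoded as t-1); v_t ~ v_{t+1}. *)
Definition path_adj (n : nat) : rel nat :=
  fun u v => [&& u < n, v < n & (u.+1 == v) || (v.+1 == u)].

Definition cover_walk (adj : rel nat) (R : seq nat) (st : pred nat)
    (w : seq nat) : Prop :=
  [/\ w != [::], st (head 0 w), all (fun v => v \in R) w,
      path adj (head 0 w) (behead w) & {subset R <= w}].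

(* a shortest such walk (length = number of entries) *)
Definition shortest_cover (adj : rel nat) (R : seq nat) (st : pred nat)
    (w : seq nat) : Prop :=
  cover_walk adj R st w /\
  forall w', cover_walk adj R st w' -> size w <= size w'.

(* Gates: H on a vertex; CR d control target; SWAP on two vertices. *)
Inductive gate :=
| Hg of nat
| CRg of int & nat & nat
| SWAPg of nat & nat.

(* A placement [loc] gives, for each vertex, the index of the logical qubit
   it currently holds. *)
Definition swap_loc (a b : nat) (loc : nat -> nat) : nat -> nat :=
  fun v => if v == a then loc b else if v == b then loc a else loc v.

(* The while loop of cascade r, run on the suffix s = (u_j, u_{j+1}, ...)
   of the walk P'. [noswap] is (k' == 2). Returns gates and new placement. *)
Fixpoint casc_loop (fuel : nat) (noswap : bool) (r : nat) (s : seq nat)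
    (U : seq nat) (loc : nat -> nat) : seq gate * (nat -> nat) :=
  match fuel with
  | 0 => ([::], loc)
  | fuel'.+1 =>
    match s with
    | uj :: uj1 :: rest =>
      let g1 := if uj1 \notin U
                then [:: CRg ((loc uj1)%:Z - r%:Z) uj1 uj] else [::] in
      let U' := if uj1 \notin U then uj1 :: U else U in
      let swap_step :=
        let gsw := if noswap then [::] else [:: SWAPg uj uj1] in
        let loc1 := if noswap then loc else swap_loc uj uj1 loc in
        let res := casc_loop fuel' noswap r (uj1 :: rest) U' loc1 in
        (g1 ++ gsw ++ res.1, res.2) in
      match rest with
      | uj2 :: _ =>
        if uj2 == uj then
          let res := casc_loop fuel' noswap r rest U' loc in
          (g1 ++ res.1, res.2)
        else swap_step
      | [::] => swap_step
      end
    | _ => ([::], loc)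
    end
  end.

Definition cascade (r : nat) (w : seq nat) (loc : nat -> nat)
    : seq gate * (nat -> nat) :=
  let res := casc_loop (size w) (size w == 2) r w [::] loc in
  (Hg (head 0 w) :: res.1, res.2).

Fixpoint run_rest (r : nat) (ws : seq (seq nat)) (R : seq nat)
    (loc : nat -> nat) : seq gate :=
  match ws with
  | [::] => [::]
  | w :: ws' =>
    let res := cascade r w loc in
    res.1 ++ run_rest r.+1 ws' [seq v <- R | res.2 v != r] res.2
  end.

Fixpoint valid_rest (adj : rel nat) (r : nat) (ws : seq (seq nat))
    (R : seq nat) (loc : nat -> nat) : Prop :=
  match ws with
  | [::] => True
  | w :: ws' =>
    let res := cascade r w loc in
    shortest_cover adj R (fun v => loc v == r) w /\
    valid_rest adj r.+1 ws' [seq v <- R | res.2 v != r] res.2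
  end.

Definition init_loc (P : seq nat) : nat -> nat :=
  fun v => (index v (undup P)).+1.

(* c is a circuit produced by the construction on the graph (V = 0..n-1, adj),
   for some admissible choice of the shortest walks. *)
Definition qft_produces (adj : rel nat) (n : nat) (c : seq gate) : Prop :=
  exists (P : seq nat) (ws : seq (seq nat)),
    let V := iota 0 n in
    let res1 := cascade 1 P (init_loc P) in
    let R1 := [seq v <- V | res1.2 v != 1] in
    [/\ shortest_cover adj V predT P,
        size ws = n.-1,
        valid_rest adj 2 ws R1 res1.2 &
        c = res1.1 ++ run_rest 2 ws R1 res1.2].

Fixpoint cnot_cost (c : seq gate) : nat :=
  match c with
  | [::] => 0
  | g :: t =>
    match g with
    | Hg _ => cnot_cost t
    | SWAPg _ _ => 3 + cnot_cost t
    | CRg _ a b =>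
      match t with
      | SWAPg x y :: t' =>
        if ((a == x) && (b == y)) || ((a == y) && (b == x))
        then 3 + cnot_cost t' else 2 + cnot_cost t
      | _ => 2 + cnot_cost t
      end
    end
  end.

From mathcomp Require Import all_boot all_order all_algebra.
From mathcomp Require Import zify lra.
Import GRing.Theory Num.Theory.

Set Implicit Arguments.
Unset Strict Implicit.
Unset Printing Implicit Defensive.

(* In the path graph the construction has no freedom left.  A shortest walk
   covering all vertices is Hamiltonian, and a Hamiltonian walk in a path is
   monotone, hence chordless.  Inductively, the vertices still in play form a
   chordless path carrying logical qubits r, r+1, ... in order, so the only
   covering walk of minimal length starting at qubit r is that path itself.
   Cascade r along a path of m vertices consists of m-1 fused CR+SWAP pairs,
   3(m-1) CNOTs, except for m = 2 where no SWAP is applied and it costs 2; it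
   carries qubit r to the far end, and the other m-1 vertices again form such
   a path.  Summing over m = n, ..., 1 gives 3n(n-1)/2 - 1. *)

Definition starts_with_H (c : seq gate) : bool :=
  if c is g :: _ then if g is Hg _ then true else false else true.

(* A leading H keeps the CR-then-SWAP discount from straddling the seam. *)
Lemma cnot_cost_cat (c1 c2 : seq gate) :
  starts_with_H c2 -> cnot_cost (c1 ++ c2) = cnot_cost c1 + cnot_cost c2.
Proof.
move=> c2H; elim: c1 => [|g c1 IH] //=.
case: g => [x|d u v|x y] /=; try by rewrite IH.
case: c1 IH => [|[x|d' u' v'|x y] c1] /= IH; try by rewrite IH.
  by clear IH; case: c2 c2H => [|[]].
case: ifP => _; last by rewrite IH.
by move: IH => /=; lia.
Qed.

Lemma casc_loop_swap_step fuel r x y rest U loc :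
  uniq [:: x, y & rest] -> y \notin U ->
  casc_loop fuel.+1 false r [:: x, y & rest] U loc =
  (CRg ((loc y)%:Z - r%:Z) y x :: SWAPg x y
     :: (casc_loop fuel false r (y :: rest) (y :: U) (swap_loc x y loc)).1,
   (casc_loop fuel false r (y :: rest) (y :: U) (swap_loc x y loc)).2).
Proof.
move=> /andP[xNyrest _] yNU; case: rest xNyrest => [|z rest] //= xNyrest.
  by rewrite yNU.
by rewrite yNU ifN_eq //; apply: contraNneq xNyrest => ->; rewrite !inE eqxx orbT.
Qed.

Lemma casc_loop_swap_chain r s U loc :
  uniq s -> {in behead s, forall v, v \notin U} ->
  let res := casc_loop (size s) false r s U loc in
  [/\ cnot_cost res.1 = 3 * (size s).-1,
      forall v, v \notin s -> res.2 v = loc v,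
      forall i, i.+1 < size s -> res.2 (nth 0 s i) = loc (nth 0 s i.+1) &
      res.2 (last 0 s) = loc (head 0 s)].
Proof.
elim: s U loc => [|x [|y rest] IH] U loc; try by split => // -[].
move=> uxyr yrestNU.
rewrite [size _]/= casc_loop_swap_step ?yrestNU ?mem_head //.
have /andP[xNyr uyr] := uxyr.
have restNyU : {in rest, forall v, v \notin y :: U}.
  move=> v vr; rewrite inE negb_or yrestNU ?inE ?vr ?orbT // andbT.
  by apply: contraNneq (andP uyr).1 => <-.
have [cost out shift lastE] := IH (y :: U) (swap_loc x y loc) uyr restNyU.
set res := casc_loop _ _ _ _ _ _ in cost out shift lastE *.
split.
- by rewrite /= !eqxx andbT orbT cost /=; lia.
- move=> v; rewrite !inE !negb_or => /and3P[vNx vNy vNr].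
  by rewrite /= out ?inE ?negb_or ?vNy // /swap_loc (negbTE vNx) (negbTE vNy).
- case=> [|i] /= ilt; first by rewrite out ?inE // /swap_loc eqxx.
  have ir : nth 0 rest i \in rest by rewrite mem_nth.
  rewrite shift // /swap_loc ifN_eq; last by apply: contraNneq xNyr => <-; rewrite inE ir orbT.
  by rewrite ifN_eq //; apply: contraNneq (andP uyr).1 => <-.
- by move: lastE => /= ->; rewrite /swap_loc eqxx; case: eqP => // ->.
Qed.

Lemma nth_belast x s i : i < size s -> nth 0 (belast x s) i = nth 0 (x :: s) i.
Proof. by move=> ilt; rewrite lastI nth_rcons size_belast ilt. Qed.

Definition cascade_cnots (m : nat) : nat := if m == 2 then 2 else 3 * m.-1.

Definition placed_along (loc : nat -> nat) (r : nat) (L : seq nat) : Prop :=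
  forall i, i < size L -> loc (nth 0 L i) = r + i.

(* For k' = 2 no SWAP is applied, so qubit r stays on the first vertex. *)
Definition cascade_rest (L : seq nat) : seq nat :=
  if L is [:: _; y] then [:: y] else belast (head 0 L) (behead L).

Lemma cascade_swap_chain r L loc : uniq L -> 2 < size L ->
  [/\ cnot_cost (cascade r L loc).1 = 3 * (size L).-1,
      forall i, i.+1 < size L -> (cascade r L loc).2 (nth 0 L i) = loc (nth 0 L i.+1) &
      (cascade r L loc).2 (last 0 L) = loc (head 0 L)].
Proof.
move=> uL L2; have fresh : {in behead L, forall v, v \notin [::]} by [].
have [cost _ shift lastE] := casc_loop_swap_chain r loc uL fresh.
have noswap : (size L == 2) = false by lia.
by rewrite /cascade /= noswap.
Qed.

Lemma cascade_rest_long L : 2 < size L -> cascade_rest L = belast (head 0 L) (behead L).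
Proof. by case: L => [|x [|y [|z s]]]. Qed.

Lemma size_cascade_rest L : size (cascade_rest L) = (size L).-1.
Proof. by case: L => [|x [|y [|z s]]] //=; rewrite size_belast. Qed.

Lemma cascade_cnot_cost r L loc :
  uniq L -> cnot_cost (cascade r L loc).1 = cascade_cnots (size L).
Proof.
case: L => [|x [|y [|z s]]] // uL.
by have [-> _ _] := cascade_swap_chain r loc uL isT.
Qed.

Lemma cascade_placed r L loc : uniq L -> placed_along loc r L ->
  placed_along (cascade r L loc).2 r.+1 (cascade_rest L).
Proof.
case: L => [|x [|y [|z s]]] // uL placed.
- by move=> [|//] _; rewrite /cascade /= (placed 1) // addn0 addn1.
- set L := [:: x, y, z & s] in uL placed *.
  have [_ shift _] := cascade_swap_chain r loc uL isT.
  rewrite cascade_rest_long // => i; rewrite size_belast => ilt.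
  by rewrite nth_belast // shift ?placed ?addSnnS.
Qed.

Lemma mem_cascade_rest r L loc : uniq L -> placed_along loc r L ->
  forall v, (v \in cascade_rest L) = (v \in L) && ((cascade r L loc).2 v != r).
Proof.
case: L => [|x [|y [|z s]]] // uL placed v.
- by rewrite /cascade /= !inE; case: eqP => // ->; rewrite (placed 0) // addn0 eqxx.
- rewrite /cascade /= !inE; case: eqP => [->|_]; first by rewrite (placed 1) // orbT; lia.
  by rewrite orbF; case: eqP => // ->; rewrite (placed 0) // addn0 eqxx.
set L := [:: x, y, z & s] in uL placed *; set s' := [:: y, z & s].
have [_ shift lastE] := cascade_swap_chain r loc uL isT.
rewrite cascade_rest_long //.
have -> : v \in L = (v == last x s') || (v \in belast x s') by rewrite /L lastI mem_rcons inE.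
case: eqP => [->|_]; rewrite ?orTb ?orFb.
  have /negbTE -> : last x s' \notin belast x s'.
    by move: uL; rewrite /L lastI rcons_uniq => /andP[].
  by change (last x s') with (last 0 L); rewrite lastE (placed 0) // addn0 eqxx.
case vin : (v \in belast x s') => //.
have ilt : index v (belast x s') < size s' by rewrite -(size_belast x) index_mem.
by rewrite -(nth_index 0 vin) nth_belast // shift // placed //; lia.
Qed.

Definition chordless (adj : rel nat) (L : seq nat) : Prop :=
  forall i j, i < j -> j < size L -> adj (nth 0 L i) (nth 0 L j) -> j = i.+1.

Definition induced_path (adj : rel nat) (L : seq nat) : Prop :=
  [/\ uniq L, path adj (head 0 L) (behead L) & chordless adj L].

Lemma chordless_behead adj x L : chordless adj (x :: L) -> chordless adj L.
Proof. by move=> chL i j ij jL /(chL i.+1 j.+1 ij jL) []. Qed.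

Lemma induced_path_belast adj x s :
  induced_path adj (x :: s) -> induced_path adj (belast x s).
Proof.
case: s => [|y s] [uL pL chL]; first by split => // i j; lia.
split.
- by move: uL; rewrite lastI rcons_uniq => /andP[].
- have pxys : path adj x (y :: s) := pL.
  by rewrite [y :: s]lastI rcons_path in pxys; case/andP: pxys.
- move=> i j ij; rewrite size_belast => js.
  rewrite !nth_belast //; last exact: ltn_trans ij js.
  exact: chL ij (ltnW js).
Qed.

Lemma induced_path_cascade_rest adj L :
  induced_path adj L -> induced_path adj (cascade_rest L).
Proof.
case: L => [|x [|y [|z s]]]; try by move=> _; split => // i j /=; lia.
by rewrite cascade_rest_long //; apply: induced_path_belast.
Qed.

Lemma chordless_walk_eq adj L w :
  uniq L -> chordless adj L -> uniq w -> path adj (head 0 w) (behead w) ->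
  head 0 w = head 0 L -> {subset w <= L} -> size w = size L -> w = L.
Proof.
elim: L w => [|x L IH] [|x' w] // uL chL uw pw hw sub sz.
have {hw} xx' : x' = x := hw; subst x'.
case: w uw pw sub sz => [|z w] uw pw sub sz; first by case: L {IH uL chL sub} sz.
have /andP[xz pzw] : adj x z && path adj z w := pw.
have /andP[xNzw uzw] : (x \notin z :: w) && uniq (z :: w) := uw.
have zL : z \in L.
  have := sub z; rewrite !inE eqxx orbT => /(_ isT) /orP[/eqP zx|//].
  by move: xNzw; rewrite zx mem_head.
have zh : z = head 0 L.
  have izL : (index z L).+1 < size (x :: L) by rewrite /= ltnS index_mem.
  have := chL 0 _ (ltn0Sn _) izL; rewrite /= nth_index // => /(_ xz) [iz0].
  by rewrite -[z](nth_index 0 zL) iz0 nth0.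
congr (_ :: _); apply: IH => //.
- by case/andP: uL.
- exact: chordless_behead chL.
- move=> v vzw; have := sub v; rewrite in_cons vzw orbT => /(_ isT).
  rewrite inE => /orP[/eqP vx|//].
  by move: xNzw; rewrite -vx vzw.
- by case: sz.
Qed.

Lemma shortest_cover_uniq adj R st L w : cover_walk adj R st L -> uniq L ->
  shortest_cover adj R st w -> uniq w /\ size w = size L.
Proof.
move=> coverL uL [[_ _ _ _ Rw] minw].
have [_ _ LR _ _] := coverL.
have Lw : {subset L <= w} by move=> v /(allP LR) /Rw.
have le := minw L coverL.
split; first exact: leq_size_uniq uL Lw le.
by apply/eqP; rewrite eqn_leq le uniq_leq_size.
Qed.

Lemma cover_walk_induced_path adj R (st : pred nat) L :
  induced_path adj L -> R =i L -> 0 < size L -> st (head 0 L) -> cover_walk adj R st L.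
Proof.
move=> [_ pL _] RL L0 stL; split => //.
- by rewrite -size_eq0 -lt0n.
- by apply/allP => v; rewrite RL.
- by move=> v; rewrite RL.
Qed.

Lemma shortest_cover_induced_path adj R r loc L w :
  induced_path adj L -> R =i L -> placed_along loc r L -> 0 < size L ->
  shortest_cover adj R (fun v => loc v == r) w -> w = L.
Proof.
move=> pL RL placed L0 shw; have [uL _ chL] := pL.
have coverL : cover_walk adj R (fun v => loc v == r) L.
  by apply: cover_walk_induced_path => //=; rewrite -nth0 placed // addn0.
have [uw sw] := shortest_cover_uniq coverL uL shw.
have [[w0 hw wR pw _] _] := shw.
have wL : {subset w <= L} by move=> v /(allP wR); rewrite RL.
have hL : head 0 w \in L by apply: wL; case: (w) w0 => // v w1 _; apply: mem_head.
have ilt : index (head 0 w) L < size L by rewrite index_mem.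
have := placed _ ilt; rewrite nth_index // (eqP hw) => ri.
have hwL : head 0 w = head 0 L.
  by rewrite -(nth_index 0 hL) (_ : index _ _ = 0) ?nth0 //; lia.
exact: chordless_walk_eq uL chL uw pw hwL wL sw.
Qed.

Fixpoint qft_cnots (m : nat) : nat :=
  if m is m'.+1 then cascade_cnots m + qft_cnots m' else 0.

Lemma run_rest_cons r w ws R loc :
  run_rest r (w :: ws) R loc =
  (cascade r w loc).1 ++ run_rest r.+1 ws [seq v <- R | (cascade r w loc).2 v != r]
                                         (cascade r w loc).2.
Proof. by []. Qed.

Lemma run_rest_starts_with_H r ws R loc : starts_with_H (run_rest r ws R loc).
Proof. by case: ws. Qed.

Lemma run_rest_cnot_cost adj ws r R L loc :
  size ws = size L -> induced_path adj L -> R =i L -> placed_along loc r L ->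
  valid_rest adj r ws R loc -> cnot_cost (run_rest r ws R loc) = qft_cnots (size L).
Proof.
elim: ws r R L loc => [|w ws IH] r R L loc sz pL RL placed.
  by case: L sz {pL RL placed}.
move=> [shw valid]; have L0 : 0 < size L by rewrite -sz.
have wL := shortest_cover_induced_path pL RL placed L0 shw; subst w.
have [uL _ _] := pL.
rewrite run_rest_cons cnot_cost_cat ?run_rest_starts_with_H // cascade_cnot_cost //.
rewrite (IH _ _ (cascade_rest L)) //.
- by rewrite size_cascade_rest; case: (size L) L0.
- by rewrite size_cascade_rest -sz.
- exact: induced_path_cascade_rest.
- by move=> v; rewrite mem_filter RL (mem_cascade_rest uL placed) andbC.
- exact: cascade_placed.
Qed.

Lemma path_adj_walk_monotone n x s : uniq (x :: s) -> path (path_adj n) x s ->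
  (forall i, i <= size s -> nth 0 (x :: s) i = x + i) \/
  (forall i, i <= size s -> nth 0 (x :: s) i + i = x).
Proof.
elim: s x => [|y s IH] x uxs pxs; first by left; case => // _; rewrite addn0.
have /andP[xy pys] : path_adj n x y && path (path_adj n) y s := pxs.
have /andP[xNys uys] : (x \notin y :: s) && uniq (y :: s) := uxs.
have {}xy : y = x.+1 \/ x = y.+1 by move: xy => /and3P[_ _ /orP[/eqP|/eqP]]; [left|right].
case: s IH uxs pxs xNys uys pys => [|z s] IH _ _ xNys uys pys.
  by case: xy => ->; [left|right] => -[|[|i]] //= _; lia.
have xz : x != z by apply: contraNneq xNys => ->; rewrite !inE eqxx orbT.
case: (IH y uys pys) => mono; [left|right] => -[|i] ilt; rewrite ?addn0 //.
all: by have := mono 1 isT; have := mono i ilt; rewrite /=; lia.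
Qed.

Lemma path_adj_chordless n L :
  uniq L -> path (path_adj n) (head 0 L) (behead L) -> chordless (path_adj n) L.
Proof.
case: L => [|x s] // uL pL i j ij js /and3P[_ _ ij_adj].
have jlt : j <= size s := js.
have ilt : i <= size s := ltnW (leq_trans ij jlt).
by case: (path_adj_walk_monotone uL pL) => mono;
  move: ij_adj (mono i ilt) (mono j jlt); lia.
Qed.

Lemma path_adj_iota n m k : m + k < n -> path (path_adj n) m (iota m.+1 k).
Proof.
elim: k m => [|k IH] m mkn //=.
rewrite IH; last lia.
by rewrite /path_adj eqxx orTb !andbT; apply/andP; split; lia.
Qed.

Lemma cover_walk_iota n : 0 < n -> cover_walk (path_adj n) (iota 0 n) predT (iota 0 n).
Proof.
by case: n => // n _; split => //; apply: path_adj_iota; rewrite add0n.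
Qed.

Lemma qft_cnots_closed n : 2 <= n -> 2 * qft_cnots n + 3 * n + 2 = 3 * n ^ 2.
Proof.
case: n => [|[|k]] // _; elim: k => [|k IH] //.
have -> : qft_cnots k.+3 = 3 * k.+2 + qft_cnots k.+2 by [].
by move: IH; lia.
Qed.

Lemma qft_path_cnot_cost n c :
  2 <= n -> qft_produces (path_adj n) n c -> cnot_cost c = qft_cnots n.
Proof.
move=> n2 [P [ws [shP ws_size valid ->]]].
have n0 : 0 < n by lia.
have [uP sizeP] := shortest_cover_uniq (cover_walk_iota n0) (iota_uniq 0 n) shP.
rewrite size_iota in sizeP.
have [[_ _ PV pP VP] minP] := shP.
have iotaP : iota 0 n =i P by move=> v; apply/idP/idP => [/VP|/(allP PV)].
have placedP : placed_along (init_loc P) 1 P.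
  by move=> i iP; rewrite /init_loc undup_id // index_uniq.
have indP : induced_path (path_adj n) P by split => //; exact: path_adj_chordless.
have shP1 : shortest_cover (path_adj n) (iota 0 n) (fun v => init_loc P v == 1) P.
  have P0 : 0 < size P by rewrite sizeP.
  split; first by apply: cover_walk_induced_path => //=; rewrite -nth0 placedP.
  by move=> w [w0 _ wV pw Vw]; apply: minP.
change (cnot_cost (run_rest 1 (P :: ws) (iota 0 n) (init_loc P)) = qft_cnots n).
by rewrite (run_rest_cnot_cost (adj := path_adj n) (L := P)) ?sizeP //= ws_size; lia.
Qed.

Local Open Scope ring_scope.

Theorem lemma6 (n : nat) (c : seq gate) :
  (2 <= n)%N -> qft_produces (path_adj n) n c ->
  (cnot_cost c)%:R = (3%:R / 2%:R) * (n%:R) ^+ 2 - (3%:R / 2%:R) * n%:R - 1 :> rat.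
Proof.
move=> n2 qft; rewrite (qft_path_cnot_cost n2 qft).
have : (2 * qft_cnots n + 3 * n + 2)%N%:R = (3 * n ^ 2)%N%:R :> rat.
  by rewrite qft_cnots_closed.
rewrite !natrD !natrM expr2.
lra.
Qed.
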